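(* Consider any quantum secret sharing (QSS) scheme on $n$ parties whose access structure $\Gamma$ (the collection of authorized sets) is non-empty. Let $t_{\min}$ be the minimum integer $t$ such that every set of $t$ or more parties is authorized, and let $z_{\max}$ be the maximum integer $z$ such that every set of $z$ or fewer parties is unauthorized. Then $n\leq t_{\min}+z_{\max}$. If the QSS scheme is a pure state QSS scheme, then $n=t_{\min}+z_{\max}$.
   Context: A QSS scheme on $n$ parties is an encoding of a quantum secret into a joint state of $n$ subsystems (shares), the $j$-th share being given to party $j\in[n]=\{1,\dots,n\}$. A set $P\subseteq[n]$ of parties is authorized if the secret can be recovered from the shares of the parties in $P$, and unauthorized if the shares of the parties in $P$ contain no information about the secret. The access structure $\Gamma$ is the collection of authorized sets and the adversary structure the collection of unauthorized sets; these are disjoint, and a set may be neither (intermediate). A QSS scheme is a pure state QSS scheme if every pure state secret is encoded into a pure state of the $n$ shares. *)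

From HB Require Import structures.
From mathcomp Require Import all_boot all_order all_algebra.
Set Implicit Arguments. Unset Strict Implicit. Unset Printing Implicit Defensive.
Import Order.TTheory GRing.Theory Num.Theory.
Local Open Scope ring_scope.

Section Quantum.
Variable C : numClosedFieldType.

Definition op (I J : finType) := I -> J -> C.
Arguments op : clear implicits.

Definition mulop (I J K : finType) (A : op I J) (B : op J K) : op I K :=
  fun i k => \sum_(j : J) A i j * B j k.

Definition adjop (I J : finType) (A : op I J) : op J I :=
  fun j i => (A i j)^*.

Definition trop (I : finType) (A : op I I) : C := \sum_(i : I) A i i.

Definition psd (I : finType) (A : op I I) : Prop :=
  forall v : I -> C, 0 <= \sum_(i : I) \sum_(j : I) (v i)^* * A i j * v j.

Definition density (I : finType) (rho : op I I) : Prop :=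
  psd rho /\ trop rho = 1.

Definition pure_state (I : finType) (rho : op I I) : Prop :=
  density rho /\ exists v : I -> C, forall i j, rho i j = v i * (v j)^*.

(* quantum channel (CPTP map) in operator-sum (Kraus) form *)
Definition channel (I J : finType) (Phi : op I I -> op J J) : Prop :=
  exists (m : nat) (K : 'I_m -> op J I),
    (forall i i' : I, \sum_(k < m) mulop (adjop (K k)) (K k) i i' = (i == i')%:R)
    /\ forall (X : op I I) (a b : J),
         Phi X a b = \sum_(k < m) mulop (mulop (K k) X) (adjop (K k)) a b.

(* n parties; party j holds a share with (finite) basis S j *)
Variable n : nat.
Variable S : 'I_n -> finType.

(* basis of the joint system of all n shares *)
Definition joint := {dffun forall j : 'I_n, S j}.

(* basis of the joint system of the shares of the parties in P *)
Definition red (P : {set 'I_n}) := {dffun forall j : {j : 'I_n | j \in P}, S (val j)}.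

Definition restr (P : {set 'I_n}) (x : joint) : red P :=
  [ffun j : {j : 'I_n | j \in P} => x (val j)].

Definition ptrace (P : {set 'I_n}) (X : op joint joint) : op (red P) (red P) :=
  fun a b => \sum_(x : joint) \sum_(y : joint)
    (if [&& restr P x == a, restr P y == b &
          [forall j : 'I_n, (j \notin P) ==> (x j == y j)]]
     then X x y else 0).

Arguments ptrace P X : clear implicits.
Variable Sec : finType. (* basis of the secret system *)
Variable E : op Sec Sec -> op joint joint.

Definition authorized (P : {set 'I_n}) : Prop :=
  exists D : op (red P) (red P) -> op Sec Sec, channel D /\
    forall rho : op Sec Sec, density rho ->
      forall a b : Sec, D (ptrace P (E rho)) a b = rho a b.

Definition unauthorized (P : {set 'I_n}) : Prop :=
  forall rho sigma : op Sec Sec, density rho -> density sigma ->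
    forall a b : red P, ptrace P (E rho) a b = ptrace P (E sigma) a b.

Definition pure_scheme : Prop :=
  forall rho : op Sec Sec, pure_state rho -> pure_state (E rho).

End Quantum.

From HB Require Import structures.
From mathcomp Require Import all_boot all_order all_algebra.
Import Order.TTheory GRing.Theory Num.Theory.
Local Open Scope ring_scope.
From mathcomp Require Import ring zify.
From Stdlib Require Import FunctionalExtensionality.

(* Write E(rho) = sum_k K_k rho K_k^*, and for a set P of parties let T_w, for w a
   configuration of the shares outside P, be the Kraus operators of the partial
   trace onto P.  If P is authorized, the channel D o Tr o E is the identity on all
   states, so its Kraus operators are scalars; this gives the Knill-Laflamme
   condition (T_w K_k)^* (T_w' K_k') in C.1, which shows that the state of the
   complement of P does not depend on the secret.  As every set of at least t
   parties is authorized, every set of at most n - t parties is unauthorized,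
   i.e. n - t <= z.
   In a pure scheme all the K_k are multiples of a single operator V.  If Q is
   unauthorized, the operators W_a = T_a V (a a configuration of Q) satisfy
   W_a^* W_a' in C.1, because their traces against all states are constant;
   Gram-Schmidt orthonormalization of the W_a then yields a recovery channel for
   the complement of Q.  Hence every set of at least n - z parties is authorized,
   i.e. t <= n - z. *)

Set Implicit Arguments. Unset Strict Implicit. Unset Printing Implicit Defensive.
Local Open Scope sesquilinear_scope.

(** * Adjoints and scalar matrices *)

Section Adjoint.
Variable C : numClosedFieldType.
Implicit Types (m n p : nat).

Lemma trmxC_mul m n p (A : 'M[C]_(m, n)) (B : 'M[C]_(n, p)) :
  (A *m B) ^t* = B ^t* *m A ^t*.
Proof. by rewrite trmx_mul map_mxM. Qed.

Lemma trmxCD m n (A B : 'M[C]_(m, n)) : (A + B) ^t* = A ^t* + B ^t*.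
Proof. by apply/matrixP => i j; rewrite !mxE rmorphD. Qed.

Lemma trmxCB m n (A B : 'M[C]_(m, n)) : (A - B) ^t* = A ^t* - B ^t*.
Proof. by apply/matrixP => i j; rewrite !mxE rmorphB. Qed.

Lemma trmxCZ m n c (A : 'M[C]_(m, n)) : (c *: A) ^t* = c^* *: A ^t*.
Proof. by apply/matrixP => i j; rewrite !mxE rmorphM. Qed.

Lemma trmxC0 m n : (0 : 'M[C]_(m, n)) ^t* = 0.
Proof. by apply/matrixP => i j; rewrite !mxE rmorph0. Qed.

Lemma trmxC_sum m n (I : finType) (F : I -> 'M[C]_(m, n)) :
  (\sum_i F i) ^t* = \sum_i (F i) ^t*.
Proof.
apply/matrixP => i j; rewrite !mxE !summxE rmorph_sum.
by apply: eq_bigr => k _; rewrite !mxE.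
Qed.

Lemma trmxC_scalar n c : (c%:M : 'M[C]_n) ^t* = c^*%:M.
Proof. by apply/matrixP => i j; rewrite !mxE rmorphMn eq_sym. Qed.

Lemma trmxC_delta m n (i : 'I_m) (j : 'I_n) :
  (delta_mx i j : 'M[C]_(m, n)) ^t* = delta_mx j i.
Proof. by apply/matrixP => a b; rewrite !mxE rmorph_nat andbC. Qed.

Lemma cdotmx_sum m n (u w : 'M[C]_(m, n)) j :
  (u ^t* *m w) j j = \sum_i (u i j)^* * w i j.
Proof. by rewrite mxE; apply: eq_bigr => i _; rewrite !mxE. Qed.

Lemma cdotmx_ge0 m n (u : 'M[C]_(m, n)) j : 0 <= (u ^t* *m u) j j.
Proof. by rewrite cdotmx_sum sumr_ge0 // => i _; rewrite mulrC mul_conjC_ge0. Qed.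

Lemma cdotmx_eq0 m n (A : 'M[C]_(m, n)) : A ^t* *m A = 0 -> A = 0.
Proof.
move=> A0; apply/matrixP => i j; rewrite mxE.
have /eqP := congr1 (fun M : 'M[C]_n => M j j) A0.
rewrite cdotmx_sum mxE psumr_eq0 => [/allP/(_ i (mem_index_enum _))|k _].
  by rewrite mulrC mul_conjC_eq0 => /eqP.
by rewrite mulrC mul_conjC_ge0.
Qed.

Lemma outer_cV_entry m (u : 'cV[C]_m) a b : (u *m u ^t*) a b = u a 0 * (u b 0)^*.
Proof. by rewrite mxE big_ord1 !mxE. Qed.

Lemma is_scalar_trmxC n (A : 'M[C]_n) : is_scalar_mx A -> is_scalar_mx (A ^t*).
Proof. by move=> /is_scalar_mxP[a ->]; rewrite trmxC_scalar scalar_mx_is_scalar. Qed.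

End Adjoint.

Section ScalarMatrices.
Variables (R : pzRingType) (n : nat).
Implicit Types A B : 'M[R]_n.

Lemma is_scalar_mxE A (i : 'I_n) : is_scalar_mx A -> A = (A i i)%:M.
Proof. by move=> /is_scalar_mxP[a ->]; rewrite mxE eqxx mulr1n. Qed.

Lemma is_scalar_mxD A B : is_scalar_mx A -> is_scalar_mx B -> is_scalar_mx (A + B).
Proof.
by move=> /is_scalar_mxP[a ->] /is_scalar_mxP[b ->]; rewrite -raddfD scalar_mx_is_scalar.
Qed.

Lemma is_scalar_mxB A B : is_scalar_mx A -> is_scalar_mx B -> is_scalar_mx (A - B).
Proof.
by move=> /is_scalar_mxP[a ->] /is_scalar_mxP[b ->]; rewrite -raddfB scalar_mx_is_scalar.
Qed.

Lemma is_scalar_mxZ c A : is_scalar_mx A -> is_scalar_mx (c *: A).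
Proof. by move=> /is_scalar_mxP[a ->]; rewrite scale_scalar_mx scalar_mx_is_scalar. Qed.

Lemma is_scalar_mxM A B : is_scalar_mx A -> is_scalar_mx B -> is_scalar_mx (A *m B).
Proof.
by move=> /is_scalar_mxP[a ->] /is_scalar_mxP[b ->]; rewrite -scalar_mxM scalar_mx_is_scalar.
Qed.

Lemma is_scalar_mx_sum (I : finType) (F : I -> 'M[R]_n) :
  (forall i, is_scalar_mx (F i)) -> is_scalar_mx (\sum_i F i).
Proof.
move=> Fsc; elim/big_ind: _ => //; first exact: mx0_is_scalar.
exact: is_scalar_mxD.
Qed.

End ScalarMatrices.

(** * Operators as matrices, channels and partial traces *)

Section OperatorMatrices.
Variable C : numClosedFieldType.

Lemma sum_enum_val (V : nmodType) (T : finType) (F : T -> V) :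
  \sum_x F x = \sum_(i < #|T|) F (enum_val i).
Proof. by rewrite -big_enum_val. Qed.

Definition op_mx (I J : finType) (X : op C I J) : 'M[C]_(#|I|, #|J|) :=
  \matrix_(i, j) X (enum_val i) (enum_val j).
Definition mx_op (I J : finType) (A : 'M[C]_(#|I|, #|J|)) : op C I J :=
  fun x y => A (enum_rank x) (enum_rank y).

Lemma mx_opK (I J : finType) (A : 'M[C]_(#|I|, #|J|)) : op_mx (mx_op A) = A.
Proof. by apply/matrixP => i j; rewrite mxE /mx_op !enum_valK. Qed.

Lemma op_mxK (I J : finType) (X : op C I J) : mx_op (op_mx X) = X.
Proof.
apply: functional_extensionality => x; apply: functional_extensionality => y.
by rewrite /mx_op mxE !enum_rankK.
Qed.

Lemma op_mx_inj (I J : finType) : injective (@op_mx I J).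
Proof. exact: can_inj (@op_mxK I J). Qed.

Lemma op_mx_mul (I J K : finType) (A : op C I J) (B : op C J K) :
  op_mx (mulop A B) = op_mx A *m op_mx B.
Proof.
apply/matrixP => i k; rewrite !mxE /mulop sum_enum_val.
by apply: eq_bigr => j _; rewrite !mxE.
Qed.

Lemma op_mx_adj (I J : finType) (A : op C I J) : op_mx (adjop A) = (op_mx A) ^t*.
Proof. by apply/matrixP => i j; rewrite !mxE. Qed.

Lemma op_mx_sum (I J K : finType) (F : K -> op C I J) :
  op_mx (fun x y => \sum_k F k x y) = \sum_k op_mx (F k).
Proof.
by apply/matrixP => i j; rewrite mxE summxE; apply: eq_bigr => k _; rewrite mxE.
Qed.

Lemma trop_mx (I : finType) (X : op C I I) : trop X = \tr (op_mx X).
Proof.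
by rewrite /trop /mxtrace [LHS]sum_enum_val; apply: eq_bigr => i _; rewrite mxE.
Qed.

Lemma op_mx1 (I : finType) : op_mx (fun x y : I => (x == y)%:R) = 1%:M :> 'M[C]_#|I|.
Proof. by apply/matrixP => i j; rewrite !mxE (inj_eq enum_val_inj). Qed.

Lemma channel_kraus_mx (I J : finType) (Phi : op C I I -> op C J J) : channel Phi ->
  exists m (K : 'I_m -> 'M[C]_(#|J|, #|I|)),
    \sum_k (K k) ^t* *m K k = 1%:M /\
    forall X, op_mx (Phi X) = \sum_k K k *m op_mx X *m (K k) ^t*.
Proof.
move=> [m [K [K1 PhiE]]]; exists m, (fun k => op_mx (K k)); split.
  rewrite -op_mx1.
  have <- : (fun i i' => \sum_(k < m) mulop (adjop (K k)) (K k) i i') = (fun i i' => (i == i')%:R).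
    by apply: functional_extensionality => i; apply: functional_extensionality => i'.
  by rewrite op_mx_sum; apply: eq_bigr => k _; rewrite op_mx_mul op_mx_adj.
move=> X.
have -> : Phi X = (fun a b => \sum_(k < m) mulop (mulop (K k) X) (adjop (K k)) a b).
  by apply: functional_extensionality => a; apply: functional_extensionality => b.
by rewrite op_mx_sum; apply: eq_bigr => k _; rewrite !op_mx_mul op_mx_adj.
Qed.

Lemma kraus_mx_channel (I J L : finType) (R : L -> 'M[C]_(#|J|, #|I|)) :
  \sum_l (R l) ^t* *m R l = 1%:M ->
  exists Phi : op C I I -> op C J J, channel Phi /\
    forall X, op_mx (Phi X) = \sum_l R l *m op_mx X *m (R l) ^t*.
Proof.
move=> R1; pose K := fun k : 'I_#|L| => (mx_op (R (enum_val k)) : op C J I).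
exists (fun X a b => \sum_(k < #|L|) mulop (mulop (K k) X) (adjop (K k)) a b); split.
  exists #|L|, K; split => // i i'.
  suff /(congr1 (fun f => f i i')) : (fun i i' => \sum_(k < #|L|) mulop (adjop (K k)) (K k) i i') =
            (fun x y : I => (x == y)%:R) by [].
  apply: op_mx_inj; rewrite op_mx1 -R1 op_mx_sum [RHS]sum_enum_val.
  by apply: eq_bigr => k _; rewrite op_mx_mul op_mx_adj mx_opK.
move=> X; rewrite op_mx_sum [RHS]sum_enum_val.
by apply: eq_bigr => k _; rewrite !op_mx_mul op_mx_adj mx_opK.
Qed.

Lemma density_rank1 (I : finType) (c : C) (v : 'cV[C]_#|I|) :
  0 <= c -> c * (v ^t* *m v) 0 0 = 1 -> density (mx_op (c *: (v *m v ^t*))).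
Proof.
move=> c_ge0 cv1; split; last first.
  by rewrite trop_mx mx_opK mxtraceZ mxtrace_mulC /mxtrace big_ord1.
move=> w; pose z := \sum_y (v (enum_rank y) 0)^* * w y.
suff -> : \sum_i \sum_j (w i)^* * mx_op (c *: (v *m v ^t*)) i j * w j = c * (z^* * z).
  by rewrite mulr_ge0 // mulrC mul_conjC_ge0.
rewrite /z rmorph_sum mulr_suml mulr_sumr; apply: eq_bigr => x _.
rewrite !mulr_sumr; apply: eq_bigr => y _.
rewrite /mx_op mxE outer_cV_entry rmorphM /= conjCK; ring.
Qed.

End OperatorMatrices.

Section KrausFamilies.
Variable C : numClosedFieldType.

Lemma kraus_comp_apply (I1 I2 : finType) p q r (L : I1 -> 'M[C]_(p, q))
    (K : I2 -> 'M[C]_(q, r)) (X : 'M[C]_r) :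
  \sum_l L l *m (\sum_k K k *m X *m (K k) ^t*) *m (L l) ^t* =
  \sum_(lk : I1 * I2) (L lk.1 *m K lk.2) *m X *m (L lk.1 *m K lk.2) ^t*.
Proof.
transitivity (\sum_l \sum_k (L l *m K k) *m X *m (L l *m K k) ^t*).
  apply: eq_bigr => l _; rewrite mulmx_sumr mulmx_suml.
  by apply: eq_bigr => k _; rewrite trmxC_mul !mulmxA.
by rewrite pair_bigA.
Qed.

Lemma kraus_comp_complete (I1 I2 : finType) p q r (L : I1 -> 'M[C]_(p, q))
    (K : I2 -> 'M[C]_(q, r)) :
  \sum_l (L l) ^t* *m L l = 1%:M -> \sum_k (K k) ^t* *m K k = 1%:M ->
  \sum_(lk : I1 * I2) (L lk.1 *m K lk.2) ^t* *m (L lk.1 *m K lk.2) = 1%:M.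
Proof.
move=> L1 K1.
transitivity (\sum_l \sum_k (L l *m K k) ^t* *m (L l *m K k)); first by rewrite pair_bigA.
rewrite exchange_big /= -K1; apply: eq_bigr => k _.
transitivity ((K k) ^t* *m (\sum_l (L l) ^t* *m L l) *m K k).
  by rewrite mulmx_sumr mulmx_suml; apply: eq_bigr => l _; rewrite trmxC_mul !mulmxA.
by rewrite L1 mulmx1.
Qed.

Lemma scalar_kraus_id (I : finType) s (i0 : 'I_s) (M : I -> 'M[C]_s) (X : 'M[C]_s) :
  (forall i, is_scalar_mx (M i)) -> \sum_i (M i) ^t* *m M i = 1%:M ->
  \sum_i M i *m X *m (M i) ^t* = X.
Proof.
move=> M_scalar M1.
have ME i : M i = (M i i0 i0)%:M by apply: is_scalar_mxE.
have M1' : \sum_i (M i i0 i0)^* * M i i0 i0 = 1.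
  have := congr1 (fun A : 'M[C]_s => A i0 i0) M1; rewrite summxE mxE eqxx mulr1n => <-.
  apply: eq_bigr => i _; move: (ME i); set c := M i i0 i0 => ->.
  by rewrite trmxC_scalar -scalar_mxM mxE eqxx mulr1n.
transitivity (\sum_i ((M i i0 i0)^* * M i i0 i0) *: X); last first.
  by rewrite -scaler_suml M1' scale1r.
apply: eq_bigr => i _; move: (ME i); set c := M i i0 i0 => ->.
by rewrite trmxC_scalar mul_scalar_mx -scalemxAl mul_mx_scalar scalerA mulrC.
Qed.

Lemma gram_rank1_parallel (I : finType) p q (K : I -> 'M[C]_(p, q)) (c : I -> C) :
  (forall k k', (K k) ^t* *m K k' = ((c k)^* * c k')%:M) -> forall k0, c k0 != 0 ->
  forall k, K k = (c k / c k0) *: K k0.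
Proof.
move=> Kc k0 ck0 k; apply/eqP; rewrite -subr_eq0; apply/eqP/cdotmx_eq0.
rewrite trmxCB trmxCZ mulmxBl !mulmxBr -!scalemxAl -!scalemxAr !Kc !scale_scalar_mx.
rewrite -!raddfB /= rmorphM /= fmorphV /=.
have ck0' : (c k0)^* != 0 by rewrite conjC_eq0.
by rewrite [X in X%:M](_ : _ = 0) ?raddf0 //; field; rewrite ck0.
Qed.

End KrausFamilies.

Section PartialTrace.
Variables (C : numClosedFieldType) (n : nat) (S : 'I_n -> finType).
Implicit Types (P Q : {set 'I_n}) (x y : joint S).

Lemma restr_eqE P x y : (restr P x == restr P y) = [forall j, (j \in P) ==> (x j == y j)].
Proof.
apply/eqP/forallP => [xy j|xy].
  apply/implyP => jP; have := congr1 (fun f : red S P => f (exist _ j jP)) xy.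
  by rewrite !ffunE /= => ->.
by apply/ffunP => [[j jP]]; rewrite !ffunE /=; apply/eqP; exact: (implyP (xy j) jP).
Qed.

Lemma restr_inj P Q x y : (forall j, (j \in P) || (j \in Q)) ->
  restr P x = restr P y -> restr Q x = restr Q y -> x = y.
Proof.
move=> PQ /eqP; rewrite restr_eqE => /forallP xyP /eqP; rewrite restr_eqE => /forallP xyQ.
apply/ffunP => j; apply/eqP; have /orP[jP|jQ] := PQ j.
  exact: (implyP (xyP j) jP).
exact: (implyP (xyQ j) jQ).
Qed.

(* [slice P Q w] is the partial bra <w| on the shares in Q, as an operator into the
   shares in P; when Q is the complement of P these are Kraus operators of the
   partial trace onto P. *)
Definition slice P Q (w : red S Q) : op C (red S P) (joint S) :=
  fun a x => ((restr P x == a) && (restr Q x == w))%:R.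
Arguments slice P Q w : clear implicits.

Lemma slice_swap P Q (a : red S P) (w : red S Q) x : slice Q P a w x = slice P Q w a x.
Proof. by rewrite /slice andbC. Qed.

Lemma sum_indicator_eq2 (T : finType) (u v : T) :
  \sum_w ((u == w) && (v == w))%:R = (u == v)%:R :> C.
Proof.
rewrite (bigD1 u) //= eqxx /= big1 ?addr0 => [|w /negbTE uw]; first by rewrite eq_sym.
by rewrite eq_sym uw.
Qed.

Lemma ptrace_slice P Q (X : op C (joint S) (joint S)) :
  (forall j, (j \in Q) = (j \notin P)) ->
  ptrace (P := P) X =
  fun a b => \sum_w mulop (mulop (slice P Q w) X) (adjop (slice P Q w)) a b.
Proof.
move=> QE; apply: functional_extensionality => a; apply: functional_extensionality => b.
rewrite /ptrace /mulop /adjop /slice.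
transitivity (\sum_x \sum_y \sum_w ((restr P x == a) && (restr Q x == w))%:R * X x y *
                 ((restr P y == b) && (restr Q y == w))%:R); last first.
  under eq_bigr do rewrite exchange_big; rewrite exchange_big; apply: eq_bigr => w _.
  rewrite exchange_big; apply: eq_bigr => y _; rewrite mulr_suml rmorph_nat.
  by apply: eq_bigr.
apply: eq_bigr => x _; apply: eq_bigr => y _.
have -> : [forall j, (j \notin P) ==> (x j == y j)] = (restr Q x == restr Q y).
  by rewrite restr_eqE; apply: eq_forallb => j; rewrite QE.
transitivity (((restr P x == a) && (restr P y == b))%:R * X x y *
   \sum_w ((restr Q x == w) && (restr Q y == w))%:R); last first.
  rewrite mulr_sumr; apply: eq_bigr => w _.
  by case: (restr P x == a); case: (restr P y == b); case: (restr Q x == w);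
     case: (restr Q y == w); rewrite /= ?mulr0 ?mul0r ?mulr1 ?mul1r.
rewrite sum_indicator_eq2.
by case: (restr P x == a); case: (restr P y == b); case: (restr Q x == restr Q y);
   rewrite /= ?mulr0 ?mul0r ?mulr1 ?mul1r.
Qed.

Lemma ptrace_entry P Q (X : op C (joint S) (joint S)) (a a' : red S Q) :
  (forall j, (j \in P) = (j \notin Q)) ->
  ptrace X a a' = trop (mulop (mulop (slice P Q a) X) (adjop (slice P Q a'))).
Proof.
move=> PE; rewrite (ptrace_slice X PE) /trop /mulop /adjop.
apply: eq_bigr => r _; apply: eq_bigr => y _; rewrite slice_swap.
by congr (_ * _); apply: eq_bigr => x _; rewrite slice_swap.
Qed.

Lemma slice_complete P Q : (forall j, (j \in P) || (j \in Q)) ->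
  (fun x y => \sum_w mulop (adjop (slice P Q w)) (slice P Q w) x y) =
  (fun x y : joint S => (x == y)%:R).
Proof.
move=> PQ; apply: functional_extensionality => x; apply: functional_extensionality => y.
rewrite /mulop /adjop /slice.
transitivity (\sum_w \sum_a ((restr P x == a) && (restr P y == a))%:R *
                 ((restr Q x == w) && (restr Q y == w))%:R :> C).
  apply: eq_bigr => w _; apply: eq_bigr => a _; rewrite rmorph_nat.
  by case: (restr P x == a); case: (restr P y == a); case: (restr Q x == w);
     case: (restr Q y == w); rewrite /= ?mulr0 ?mul0r ?mulr1 ?mul1r.
rewrite exchange_big /=; under eq_bigr do rewrite -mulr_sumr sum_indicator_eq2.
rewrite -mulr_suml sum_indicator_eq2.
have [xyP|xyP] := eqVneq (restr P x) (restr P y);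
  have [xyQ|xyQ] := eqVneq (restr Q x) (restr Q y);
  rewrite ?mulr1 ?mul1r ?mulr0 ?mul0r.
- by rewrite (restr_inj PQ xyP xyQ) eqxx.
all: by case: eqP => // xy; move: xyP xyQ; rewrite xy eqxx.
Qed.

Definition slicemx P Q (w : red S Q) := op_mx (slice P Q w).
Arguments slicemx P Q w : clear implicits.

Lemma op_mx_ptrace P Q (X : op C (joint S) (joint S)) :
  (forall j, (j \in Q) = (j \notin P)) ->
  op_mx (ptrace (P := P) X) = \sum_w slicemx P Q w *m op_mx X *m (slicemx P Q w) ^t*.
Proof.
move=> QE; rewrite (ptrace_slice X QE) op_mx_sum; apply: eq_bigr => w _.
by rewrite !op_mx_mul op_mx_adj.
Qed.

Lemma slicemx_complete P Q : (forall j, (j \in P) || (j \in Q)) ->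
  \sum_w (slicemx P Q w) ^t* *m slicemx P Q w = 1%:M.
Proof.
move=> PQ; rewrite -op_mx1 -(slice_complete PQ) op_mx_sum.
by apply: eq_bigr => w _; rewrite op_mx_mul op_mx_adj.
Qed.

Lemma ptrace_entry_mx P Q (X : op C (joint S) (joint S)) (a a' : red S Q) :
  (forall j, (j \in P) = (j \notin Q)) ->
  ptrace X a a' = \tr (slicemx P Q a *m op_mx X *m (slicemx P Q a') ^t*).
Proof. by move=> PE; rewrite (ptrace_entry _ _ _ PE) trop_mx !op_mx_mul op_mx_adj. Qed.

End PartialTrace.
Arguments slicemx {C n S} P Q w.
Arguments slicemx_complete {C n S P Q}.

(** * Operators determined by their action on rank-one states *)

Section RankOne.
Variable C : numClosedFieldType.
Implicit Types (s : nat).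

Lemma mx11_mulE (A B : 'M[C]_1) : (A *m B) 0 0 = A 0 0 * B 0 0.
Proof. by rewrite mxE big_ord1. Qed.

Lemma cdotmxC s (u w : 'cV[C]_s) : (w ^t* *m u) 0 0 = ((u ^t* *m w) 0 0)^*.
Proof.
rewrite !cdotmx_sum rmorph_sum; apply: eq_bigr => i _.
by rewrite rmorphM /= conjCK mulrC.
Qed.

Lemma rank1_outer_sum s (I : finType) (u : I -> 'cV[C]_s) (v : 'cV[C]_s) :
  \sum_k u k *m (u k) ^t* = v *m v ^t* ->
  forall k, (v ^t* *m v) 0 0 *: u k = (v ^t* *m u k) 0 0 *: v.
Proof.
(* With N = v^* v and p_k = v^* u_k, the vectors N u_k - p_k v have total squared
   norm N^2 sum_k |u_k|^2 - N sum_k |p_k|^2 = N^2 N - N N^2 = 0. *)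
move=> uv; pose N : C := (v ^t* *m v) 0 0; pose p k : C := (v ^t* *m u k) 0 0.
have N_real : N^* = N by apply: geC0_conj; exact: cdotmx_ge0.
have sum_uu : \sum_k ((u k) ^t* *m u k) 0 0 = N.
  transitivity (\tr (\sum_k u k *m (u k) ^t*)); last first.
    by rewrite uv mxtrace_mulC trace_mx11.
  by rewrite raddf_sum; apply: eq_bigr => k _; rewrite /= mxtrace_mulC trace_mx11.
have sum_pp : \sum_k (p k)^* * p k = N * N.
  transitivity ((v ^t* *m (\sum_k u k *m (u k) ^t*) *m v) 0 0); last first.
    by rewrite uv !mulmxA -(mulmxA (v ^t* *m v)) mx11_mulE.
  rewrite mulmx_sumr mulmx_suml summxE; apply: eq_bigr => k _.
  rewrite !mulmxA -(mulmxA (v ^t* *m u k)) mx11_mulE [((u k) ^t* *m v) 0 0]cdotmxC.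
  by rewrite mulrC.
pose w k := N *: u k - p k *: v.
have ww k : ((w k) ^t* *m w k) 0 0 = N * N * ((u k) ^t* *m u k) 0 0 - N * ((p k)^* * p k).
  rewrite /w trmxCB !trmxCZ mulmxBl !mulmxBr -!scalemxAl -!scalemxAr.
  rewrite -!trace_mx11 !raddfB /= !mxtraceZ !trace_mx11 [(u k ^t* *m v) 0 0]cdotmxC.
  by rewrite -/N -/(p k) N_real; ring.
have sum_ww : \sum_k ((w k) ^t* *m w k) 0 0 = 0.
  under eq_bigr do rewrite ww.
  by rewrite sumrB -!mulr_sumr sum_uu sum_pp mulrA subrr.
move=> k; apply/eqP; rewrite -subr_eq0; apply/eqP; change (w k = 0); apply: cdotmx_eq0.
move/eqP: sum_ww; rewrite psumr_eq0 => [/allP/(_ k (mem_index_enum _))/eqP wk0|i _].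
  by rewrite [LHS]mx11_scalar wk0 raddf0.
exact: cdotmx_ge0.
Qed.
End RankOne.

Section DeltaVectors.
Variables (C : numClosedFieldType) (s : nat).
Implicit Types (a b x y : 'I_s) (X : 'M[C]_s).

Local Notation e a := (delta_mx a 0 : 'cV[C]_s).

Lemma cdotmx_delta a b : ((e a) ^t* *m e b) 0 0 = (a == b)%:R.
Proof. by rewrite trmxC_delta mul_delta_mx_cond; case: (a == b); rewrite !mxE ?eqxx. Qed.

Lemma quad_delta X a b : ((e a) ^t* *m X *m e b) 0 0 = X a b.
Proof. by rewrite trmxC_delta -rowE -colE !mxE. Qed.

Lemma mulmx_delta_entry X a b : (X *m e b) a 0 = X a b.
Proof. by rewrite -colE mxE. Qed.

Lemma quad_delta2 X x y (c : C) :
  ((e x + c *: e y) ^t* *m X *m (e x + c *: e y)) 0 0 =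
  X x x + c * X x y + c^* * X y x + c^* * c * X y y.
Proof.
rewrite trmxCD trmxCZ !(mulmxDl, mulmxDr) -!scalemxAl -!scalemxAr.
by rewrite -!trace_mx11 !raddfD /= !mxtraceZ !trace_mx11 !quad_delta; ring.
Qed.

Lemma cdotmx_delta2 x y (c : C) : x != y ->
  ((e x + c *: e y) ^t* *m (e x + c *: e y)) 0 0 = 1 + c^* * c.
Proof.
move=> xy; rewrite -[_ ^t*]mulmx1 quad_delta2 !mxE !eqxx [y == x]eq_sym (negbTE xy) /=.
by ring.
Qed.

Lemma mulmx_delta2_entry X a x y (c : C) : (X *m (e x + c *: e y)) a 0 = X a x + c * X a y.
Proof. by rewrite mulmxDr -scalemxAr -!colE !mxE. Qed.

Lemma scalar_mx_of_eigenvectors X (i0 : 'I_s) :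
  (forall v : 'cV[C]_s, (v ^t* *m v) 0 0 *: (X *m v) = (v ^t* *m X *m v) 0 0 *: v) ->
  X = (X i0 i0)%:M.
Proof.
move=> eigenX.
have offdiag x y : x != y -> X y x = 0.
  move=> xy; have /matrixP/(_ y 0) := eigenX (e x).
  rewrite cdotmx_delta quad_delta [LHS]mxE mulmx_delta_entry eqxx mul1r => ->.
  by rewrite !mxE [y == x]eq_sym (negbTE xy) mulr0.
have diag x y : X x x = X y y.
  have [<-//|xy] := eqVneq x y.
  have /matrixP/(_ x 0) := eigenX (e x + (1 : C) *: e y).
  rewrite quad_delta2 [LHS]mxE cdotmx_delta2 // mulmx_delta2_entry !mxE !eqxx.
  rewrite (negbTE xy) (offdiag y x) 1?eq_sym // (offdiag x y) //= conjC1 => /eqP.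
  by rewrite -subr_eq0 => /eqP h; apply/eqP; rewrite -subr_eq0 -h; apply/eqP; ring.
apply/matrixP => a b; rewrite !mxE.
have [<-|ab] := eqVneq a b; first by rewrite mulr1n; apply: diag.
by rewrite mulr0n offdiag // eq_sym.
Qed.

Lemma scalar_mx_of_quad_const X (k : C) :
  (forall v : 'cV[C]_s, (v ^t* *m X *m v) 0 0 = k * (v ^t* *m v) 0 0) -> X = k%:M.
Proof.
(* Polarization: test against e_x, e_x + e_y and e_x + i e_y. *)
move=> Xk.
have diag x : X x x = k by have := Xk (e x); rewrite quad_delta cdotmx_delta eqxx mulr1.
have offdiag x y : x != y -> X x y = 0.
  move=> xy.
  have /eqP := Xk (e x + (1 : C) *: e y).
  rewrite quad_delta2 cdotmx_delta2 // !diag conjC1 -subr_eq0 => /eqP sym0.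
  have /eqP := Xk (e x + 'i *: e y).
  rewrite quad_delta2 cdotmx_delta2 // !diag conjCi -subr_eq0 => /eqP asym0.
  have /eqP : 'i * (X x y - X y x) = 0 by rewrite -asym0; ring.
  rewrite mulf_eq0 (negbTE (neq0Ci C)) subr_eq0 /= => /eqP yx.
  have /eqP : 2 * X x y = 0 by rewrite -sym0 yx; ring.
  by rewrite mulf_eq0 pnatr_eq0 /= => /eqP.
apply/matrixP => a b; rewrite !mxE.
have [<-|ab] := eqVneq a b; first by rewrite mulr1n diag.
by rewrite mulr0n offdiag.
Qed.

End DeltaVectors.

Section RankOneStates.
Variables (C : numClosedFieldType) (s : nat).

Lemma cdotmx_cV_eq0 (v : 'cV[C]_s) : (v ^t* *m v) 0 0 = 0 -> v = 0.
Proof. by move=> v0; apply: cdotmx_eq0; rewrite [LHS]mx11_scalar v0 raddf0. Qed.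

Lemma scalable_rank1_ext (V : lmodType C) (f g : 'M[C]_s -> V) :
  (forall c A, f (c *: A) = c *: f A) -> (forall c A, g (c *: A) = c *: g A) ->
  (forall c (v : 'cV[C]_s), 0 <= c -> c * (v ^t* *m v) 0 0 = 1 ->
     f (c *: (v *m v ^t*)) = g (c *: (v *m v ^t*))) ->
  forall v : 'cV[C]_s, f (v *m v ^t*) = g (v *m v ^t*).
Proof.
move=> fZ gZ fg v; set N := (v ^t* *m v) 0 0.
have [N0|N0] := eqVneq N 0.
  by rewrite (cdotmx_cV_eq0 N0) mul0mx -(scale0r 0) fZ gZ !scale0r.
have N_inv_ge0 : 0 <= N^-1 by rewrite invr_ge0 cdotmx_ge0.
by rewrite -[v *m _](scalerKV N0) fZ gZ fg ?mulVf.
Qed.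

Lemma kraus_fix_rank1_scalar (I : finType) (M : I -> 'M[C]_s) (i0 : 'I_s) :
  (forall v : 'cV[C]_s, \sum_i M i *m (v *m v ^t*) *m (M i) ^t* = v *m v ^t*) ->
  forall i, M i = (M i i0 i0)%:M.
Proof.
move=> Mfix i; apply: scalar_mx_of_eigenvectors => v.
rewrite -mulmxA; apply: (rank1_outer_sum (u := fun i => M i *m v)).
by rewrite -Mfix; apply: eq_bigr => j _; rewrite trmxC_mul !mulmxA.
Qed.

Lemma scalar_mx_of_trace_rank1_states (X : 'M[C]_s) (k : C) :
  (forall c (v : 'cV[C]_s), 0 <= c -> c * (v ^t* *m v) 0 0 = 1 ->
     \tr (X *m (c *: (v *m v ^t*))) = k) ->
  X = k%:M.
Proof.
move=> Xk; apply: scalar_mx_of_quad_const => v.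
have := @scalable_rank1_ext C^o (fun A => \tr (X *m A)) (fun A => k * \tr A) _ _ _ v.
rewrite /= mulmxA mxtrace_mulC mulmxA trace_mx11 mxtrace_mulC trace_mx11; apply.
- by move=> c A; rewrite -scalemxAr mxtraceZ.
- by move=> c A; rewrite mxtraceZ mulrCA.
- by move=> c w c_ge0 cw1; rewrite Xk // mxtraceZ mxtrace_mulC trace_mx11 cw1 mulr1.
Qed.

End RankOneStates.

(** * The Knill-Laflamme condition *)

Section GramSchmidt.
Variables (C : numClosedFieldType) (a s : nat) (i0 : 'I_s).
Variable ws : seq 'M[C]_(a, s).
Hypothesis ws_scalar : {in ws &, forall u w, is_scalar_mx (u ^t* *m w)}.
Implicit Types (m : nat) (Y : nat -> 'M[C]_(a, s)) (w : 'M[C]_(a, s)).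

Definition orthonormal m Y :=
  forall i j, (i < m)%N -> (j < m)%N -> (Y i) ^t* *m Y j = (i == j)%:R%:M.

Definition spanned m Y w := exists c : nat -> C, w = \sum_(i < m) c i *: Y i.

Definition ws_compatible m Y :=
  forall i, (i < m)%N -> {in ws, forall w, is_scalar_mx ((Y i) ^t* *m w)}.

Definition gs_coord Y i w := ((Y i) ^t* *m w) i0 i0.

Definition gs_residual m Y w := w - \sum_(i < m) gs_coord Y i w *: Y i.

Lemma sum_scale_delta_scalar m (al : nat -> C) j : (j < m)%N ->
  \sum_(i < m) al i *: ((j == i)%:R%:M : 'M[C]_s) = (al j)%:M.
Proof.
move=> jm; rewrite (bigD1 (Ordinal jm)) //= eqxx scale_scalar_mx mulr1.
rewrite big1 ?addr0 // => i /= ij.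
have -> : (j == i) = false by apply/negbTE; apply: contra ij => /eqP ji; apply/eqP/val_inj.
by rewrite scale_scalar_mx mulr0 raddf0.
Qed.

Section Residual.
Variables (m : nat) (Y : nat -> 'M[C]_(a, s)) (w : 'M[C]_(a, s)).
Hypotheses (Y_on : orthonormal m Y) (Y_ws : ws_compatible m Y) (w_ws : w \in ws).

Lemma gs_residual_orth j : (j < m)%N -> (Y j) ^t* *m gs_residual m Y w = 0.
Proof.
move=> jm; rewrite mulmxBr mulmx_sumr.
under eq_bigr do rewrite -scalemxAr Y_on //.
by rewrite (sum_scale_delta_scalar (gs_coord Y ^~ w)) // /gs_coord -is_scalar_mxE ?subrr // Y_ws.
Qed.

Lemma gs_residual_ws : {in ws, forall w', is_scalar_mx ((gs_residual m Y w) ^t* *m w')}.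
Proof.
move=> w' w'_ws; rewrite trmxCB trmxC_sum mulmxBl mulmx_suml.
apply: is_scalar_mxB; first exact: ws_scalar.
by apply: is_scalar_mx_sum => i; rewrite trmxCZ -scalemxAl is_scalar_mxZ // Y_ws.
Qed.

Lemma gs_residual_cdot :
  (gs_residual m Y w) ^t* *m gs_residual m Y w = (gs_residual m Y w) ^t* *m w.
Proof.
rewrite {2}/gs_residual mulmxBr mulmx_sumr big1 ?subr0 // => i _.
by rewrite -scalemxAr -[Y i]trmxCK -trmxC_mul gs_residual_orth // trmxC0 scaler0.
Qed.

End Residual.

Definition gs_extend m Y y : nat -> 'M[C]_(a, s) := fun i => if i == m then y else Y i.

Lemma gs_extend_old m Y y i : (i < m)%N -> gs_extend m Y y i = Y i.
Proof. by move=> im; rewrite /gs_extend ltn_eqF. Qed.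

Lemma gs_extend_new m Y y : gs_extend m Y y m = y.
Proof. by rewrite /gs_extend eqxx. Qed.

Lemma orthonormal_extend m Y y : orthonormal m Y -> y ^t* *m y = 1%:M ->
  (forall j, (j < m)%N -> (Y j) ^t* *m y = 0) -> orthonormal m.+1 (gs_extend m Y y).
Proof.
move=> Y_on y1 Yy.
have yY j : (j < m)%N -> y ^t* *m Y j = 0.
  by move=> jm; rewrite -[Y j]trmxCK -trmxC_mul Yy // trmxC0.
have ltSE k : (k < m.+1)%N -> k = m \/ (k < m)%N.
  by rewrite ltnS leq_eqVlt => /orP[/eqP ->|->]; [left|right].
move=> i j /ltSE[->|im] /ltSE[->|jm].
- by rewrite gs_extend_new y1 eqxx.
- by rewrite gs_extend_new gs_extend_old // yY // gtn_eqF // raddf0.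
- by rewrite gs_extend_new gs_extend_old // Yy // ltn_eqF // raddf0.
- by rewrite !gs_extend_old // Y_on.
Qed.

Lemma ws_compatible_extend m Y y : ws_compatible m Y ->
  {in ws, forall w, is_scalar_mx (y ^t* *m w)} -> ws_compatible m.+1 (gs_extend m Y y).
Proof.
move=> Y_ws y_ws i; rewrite ltnS leq_eqVlt => /orP[/eqP ->|im].
  by rewrite gs_extend_new.
by rewrite gs_extend_old //; apply: Y_ws.
Qed.

Lemma spanned_extend m Y y (c : C) (al : nat -> C) :
  spanned m.+1 (gs_extend m Y y) (c *: y + \sum_(i < m) al i *: Y i).
Proof.
exists (fun i => if i == m then c else al i).
rewrite big_ord_recr /= eqxx gs_extend_new addrC; congr (_ + _).
by apply: eq_bigr => i _; rewrite ltn_eqF // gs_extend_old.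
Qed.

Lemma gs_step m Y w : orthonormal m Y -> ws_compatible m Y -> w \in ws ->
  exists m' Y', [/\ orthonormal m' Y', ws_compatible m' Y', spanned m' Y' w &
                   forall w', spanned m Y w' -> spanned m' Y' w'].
Proof.
move=> Y_on Y_ws w_ws; set r := gs_residual m Y w.
have w_dec : w = r + \sum_(i < m) gs_coord Y i w *: Y i by rewrite /r /gs_residual subrK.
pose mu := (r ^t* *m r) i0 i0.
have r_cdot : r ^t* *m r = mu%:M.
  by rewrite /mu -is_scalar_mxE // gs_residual_cdot //; apply: gs_residual_ws.
have [mu0|mu_neq0] := eqVneq mu 0.
  have r0 : r = 0 by apply: cdotmx_eq0; rewrite r_cdot mu0 raddf0.
  exists m, Y; split => //.
  by exists (gs_coord Y ^~ w); rewrite [LHS]w_dec r0 add0r.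
have mu_gt0 : 0 < mu by rewrite lt_def mu_neq0 cdotmx_ge0.
pose rho := sqrtC mu.
have rho_gt0 : 0 < rho by rewrite sqrtC_gt0.
have rho_neq0 : rho != 0 by rewrite gt_eqF.
have rho2 : rho * rho = mu by rewrite -expr2 sqrtCK.
pose y := rho^-1 *: r.
have y1 : y ^t* *m y = 1%:M.
  rewrite /y trmxCZ -scalemxAl -scalemxAr r_cdot !scale_scalar_mx.
  by rewrite geC0_conj ?invr_ge0 ?ltW // -rho2; congr (_%:M); field.
exists m.+1, (gs_extend m Y y); split.
- apply: orthonormal_extend => // j jm.
  by rewrite /y -scalemxAr gs_residual_orth // scaler0.
- apply: ws_compatible_extend => // w' w'_ws.
  by rewrite /y trmxCZ -scalemxAl is_scalar_mxZ //; apply: gs_residual_ws.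
- rewrite [w]w_dec (_ : r = rho *: y).
  exact: (spanned_extend _ _ _ _ (gs_coord Y ^~ w)).
  by rewrite /y scalerA mulfV // scale1r.
- move=> _ [c ->].
  rewrite (_ : \sum_(i < m) _ = 0 *: y + \sum_(i < m) c i *: Y i); last first.
    by rewrite scale0r add0r.
  exact: (spanned_extend _ _ _ _ c).
Qed.

Lemma gram_schmidt :
  exists m Y, orthonormal m Y /\ {in ws, forall w, spanned m Y w}.
Proof.
suff [m [Y [Y_on _ Y_span]]] : exists m Y,
    [/\ orthonormal m Y, ws_compatible m Y & {in ws, forall w, spanned m Y w}].
  by exists m, Y.
suff : forall ws1 : seq 'M[C]_(a, s), {subset ws1 <= ws} -> exists m Y,
    [/\ orthonormal m Y, ws_compatible m Y & {in ws1, forall w, spanned m Y w}].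
  by apply.
elim=> [|w ws1 IH] sub_ws.
  by exists 0%N, (fun _ => 0); split => // i.
have sub_ws1 : {subset ws1 <= ws}.
  by move=> x x_ws1; apply: sub_ws; rewrite inE x_ws1 orbT.
have [m [Y [Y_on Y_ws Y_span]]] := IH sub_ws1.
have [m' [Y' [Y'_on Y'_ws w_span Y'_span]]] := gs_step Y_on Y_ws (sub_ws w (mem_head _ _)).
exists m', Y'; split => // w'; rewrite inE => /orP[/eqP ->//|w'_ws1].
exact/Y'_span/Y_span.
Qed.

End GramSchmidt.

Section Recovery.
Variables (C : numClosedFieldType) (a s : nat) (i0 : 'I_s).
Variables (m : nat) (Y : nat -> 'M[C]_(a, s)).
Hypothesis Y_on : orthonormal m Y.

Definition orth_proj := \sum_(i < m) Y i *m (Y i) ^t*.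

Lemma orth_projY j : (j < m)%N -> orth_proj *m Y j = Y j.
Proof.
move=> jm; rewrite /orth_proj mulmx_suml.
under eq_bigr do rewrite -mulmxA Y_on // mul_mx_scalar.
rewrite (bigD1 (Ordinal jm)) //= eqxx scale1r big1 ?addr0 // => i /= ij.
have -> : (i == j :> nat) = false by apply/negbTE; apply: contra ij => /eqP e; apply/eqP/val_inj.
by rewrite scale0r.
Qed.

Lemma orth_proj_adj : orth_proj ^t* = orth_proj.
Proof. by rewrite trmxC_sum; apply: eq_bigr => i _; rewrite trmxC_mul trmxCK. Qed.

Lemma orth_proj_idem : orth_proj *m orth_proj = orth_proj.
Proof.
rewrite {1}/orth_proj mulmx_suml; apply: eq_bigr => i _.
by rewrite -mulmxA -{1}orth_proj_adj -trmxC_mul orth_projY.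
Qed.

(* The [inl] operators read off the coordinates along the [Y i]; the [inr] ones map
   the orthogonal complement of their span to multiples of [e_i0], which completes
   the family to a channel. *)
Definition recovery_op (J : 'I_m + 'I_a) : 'M[C]_(s, a) :=
  match J with
  | inl i => (Y i) ^t*
  | inr x => delta_mx i0 x *m (1%:M - orth_proj)
  end.

Lemma recovery_op_complete : \sum_J (recovery_op J) ^t* *m recovery_op J = 1%:M.
Proof.
rewrite big_sumType /=.
have -> : \sum_(i < m) (Y i) ^t* ^t* *m (Y i) ^t* = orth_proj.
  by apply: eq_bigr => i _; rewrite trmxCK.
have -> : \sum_(x < a) (delta_mx i0 x *m (1%:M - orth_proj)) ^t* *m
                        (delta_mx i0 x *m (1%:M - orth_proj)) = 1%:M - orth_proj.
  under eq_bigr => x _ do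
    rewrite trmxC_mul trmxC_delta !mulmxA -(mulmxA _ (delta_mx x i0)) mul_delta_mx.
  rewrite -mulmx_suml -mulmx_sumr.
  have -> : \sum_(x < a) delta_mx x x = 1%:M :> 'M[C]_a.
    by rewrite (scalar_mx_sum_delta a 1); apply: eq_bigr => i _; rewrite scale1r.
  rewrite mulmx1 trmxCB orth_proj_adj trmxC_scalar conjC1.
  by rewrite mulmxBl !mulmxBr mul1mx mulmx1 orth_proj_idem mul1mx subrr subr0.
by rewrite addrC subrK.
Qed.

Lemma recovery_op_spanned w J : spanned m Y w -> is_scalar_mx (recovery_op J *m w).
Proof.
move=> [c ->]; case: J => [i|x] /=.
  rewrite mulmx_sumr; apply: is_scalar_mx_sum => j.
  by rewrite -scalemxAr Y_on // is_scalar_mxZ // scalar_mx_is_scalar.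
rewrite -mulmxA mulmxBl mul1mx mulmx_sumr.
rewrite [X in _ - X](eq_bigr (fun i : 'I_m => c i *: Y i)) ?subrr ?mulmx0 ?mx0_is_scalar //.
by move=> i _; rewrite -scalemxAr orth_projY.
Qed.

End Recovery.

Lemma knill_laflamme_recovery (C : numClosedFieldType) (a s : nat) (i0 : 'I_s)
    (L : finType) (W : L -> 'M[C]_(a, s)) :
  (forall l l', is_scalar_mx ((W l) ^t* *m W l')) ->
  exists (J : finType) (R : J -> 'M[C]_(s, a)),
    \sum_j (R j) ^t* *m R j = 1%:M /\ forall j l, is_scalar_mx (R j *m W l).
Proof.
move=> W_kl.
have W_scalar : {in [seq W l | l <- enum L] &, forall u w, is_scalar_mx (u ^t* *m w)}.
  by move=> _ _ /mapP[l _ ->] /mapP[l' _ ->].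
have [m [Y [Y_on Y_span]]] := gram_schmidt i0 W_scalar.
exists ('I_m + 'I_a)%type, (recovery_op i0 Y); split; first exact: recovery_op_complete.
by move=> j l; apply: recovery_op_spanned => //; apply/Y_span/map_f; rewrite mem_enum.
Qed.

(** * Secret sharing schemes *)

Section Scheme.
Variables (C : numClosedFieldType) (n : nat) (S : 'I_n -> finType) (Sec : finType).
Variable E : op C Sec Sec -> op C (joint S) (joint S).
Variables (m : nat) (K : 'I_m -> 'M[C]_(#|joint S|, #|Sec|)).
Hypothesis K_complete : \sum_k (K k) ^t* *m K k = 1%:M.
Hypothesis E_kraus : forall X, op_mx (E X) = \sum_k K k *m op_mx X *m (K k) ^t*.
Variable i0 : 'I_#|Sec|.
Implicit Types (P Q : {set 'I_n}).

Lemma in_set_notin_setC P j : (j \in P) = (j \notin ~: P).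
Proof. by rewrite in_setC negbK. Qed.

Lemma authorized_kl P : authorized E P -> forall w w' k k',
  is_scalar_mx ((slicemx P (~: P) w *m K k) ^t* *m (slicemx P (~: P) w' *m K k')).
Proof.
(* D o Tr o E fixes every state, so its Kraus operators [M q] are scalars. *)
move=> [D [D_channel D_recovers]].
have [l [L [L_complete D_kraus]]] := channel_kraus_mx D_channel.
pose M (q : ('I_l * red S (~: P)) * 'I_m) := L q.1.1 *m slicemx P (~: P) q.1.2 *m K q.2.
have M_scalar q : M q = (M q i0 i0)%:M.
  apply: kraus_fix_rank1_scalar => {q} v.
  apply: (@scalable_rank1_ext _ _ _ (fun A => \sum_q M q *m A *m (M q) ^t*) id) => //.
    by move=> c A; rewrite scaler_sumr; apply: eq_bigr => q _; rewrite -scalemxAr -scalemxAl.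
  move=> c w c_ge0 cw1; set rho := c *: (w *m w ^t*).
  have rhoE : D (ptrace (E (mx_op rho))) = mx_op rho :> op C Sec Sec.
    apply: functional_extensionality => x; apply: functional_extensionality => y.
    exact/D_recovers/density_rank1.
  move/(congr1 (@op_mx _ _ _)): rhoE.
  by rewrite D_kraus (op_mx_ptrace _ (fun j => in_setC j P)) E_kraus mx_opK !kraus_comp_apply.
move=> w w' k k'.
rewrite -[slicemx P _ w' *m _]mul1mx -L_complete mulmx_suml mulmx_sumr.
apply: is_scalar_mx_sum => i.
have -> : (slicemx P (~: P) w *m K k) ^t* *m ((L i) ^t* *m L i *m (slicemx P _ w' *m K k')) =
          (M (i, w, k)) ^t* *m M (i, w', k') by rewrite /M /= !trmxC_mul !mulmxA.
by apply: is_scalar_mxM; [apply: is_scalar_trmxC|]; rewrite M_scalar scalar_mx_is_scalar.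
Qed.

Lemma authorized_setC_unauthorized P : authorized E P -> unauthorized E (~: P).
Proof.
move=> P_auth rho sigma rho_dens sigma_dens a b.
pose T (w : red S (~: P)) : 'M[C]_(#|red S P|, #|joint S|) := slicemx P (~: P) w.
suff trE (tau : op C Sec Sec) : density tau ->
    ptrace (E tau) a b = \sum_k ((T b *m K k) ^t* *m (T a *m K k)) i0 i0.
  by rewrite !trE.
move=> [_ tau1]; rewrite (ptrace_entry_mx _ _ _ (in_set_notin_setC P)) E_kraus.
rewrite mulmx_sumr mulmx_suml raddf_sum; apply: eq_bigr => k _ /=.
rewrite (_ : _ *m _ *m _ = (T a *m K k *m op_mx tau) *m (T b *m K k) ^t*); last first.
  by rewrite trmxC_mul !mulmxA.
rewrite mxtrace_mulC !mulmxA -(mulmxA _ (T a)) (is_scalar_mxE i0 (authorized_kl P_auth _ _ _ _)).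
by rewrite mul_scalar_mx mxtraceZ -trop_mx tau1 mulr1 [RHS]mxE eqxx mulr1n.
Qed.

Lemma kraus_gram_scalar P : authorized E P -> forall k k', is_scalar_mx ((K k) ^t* *m K k').
Proof.
move=> P_auth k k'; have PPc j : (j \in P) || (j \in ~: P) by rewrite in_setC orbN.
rewrite -[K k']mul1mx -(slicemx_complete PPc) !mulmx_suml mulmx_sumr.
apply: is_scalar_mx_sum => w.
by rewrite (_ : _ *m _ = (slicemx P _ w *m K k) ^t* *m (slicemx P _ w *m K k'))
  ?authorized_kl // trmxC_mul !mulmxA.
Qed.

Local Notation e0 := (delta_mx i0 0 : 'cV[C]_#|Sec|).

Lemma density_e0 : density (mx_op (1 *: (e0 *m e0 ^t*)) : op C Sec Sec).
Proof. by apply: density_rank1; rewrite ?ler01 // mul1r cdotmx_delta eqxx. Qed.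

(* A pure scheme sends the pure secret e0 to a pure state v, so every K k e0 is
   proportional to v; by the Knill-Laflamme condition this pins down the K k. *)
Lemma pure_scheme_kraus_parallel P : authorized E P -> pure_scheme E ->
  exists (V : 'M[C]_(#|joint S|, #|Sec|)) (be : 'I_m -> C), forall k, K k = be k *: V.
Proof.
move=> P_auth E_pure.
have e0_pure : pure_state (mx_op (1 *: (e0 *m e0 ^t*)) : op C Sec Sec).
  split; first exact: density_e0.
  by exists (fun x => e0 (enum_rank x) 0) => x y; rewrite /mx_op scale1r outer_cV_entry.
have [[_ Ee0_tr] [vf vfE]] := E_pure _ e0_pure.
pose v : 'cV[C]_#|joint S| := \col_i vf (enum_val i).
have Ee0 : op_mx (E (mx_op (1 *: (e0 *m e0 ^t*)))) = v *m v ^t*.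
  by apply/matrixP => i j; rewrite outer_cV_entry !mxE vfE.
have Ke0 : \sum_k (K k *m e0) *m (K k *m e0) ^t* = v *m v ^t*.
  rewrite -Ee0 E_kraus mx_opK scale1r.
  by apply: eq_bigr => k _; rewrite trmxC_mul !mulmxA.
have v1 : (v ^t* *m v) 0 0 = 1 by rewrite -trace_mx11 mxtrace_mulC -Ee0 -trop_mx.
pose p k := (v ^t* *m (K k *m e0)) 0 0.
have Ke0E k : K k *m e0 = p k *: v by rewrite -(rank1_outer_sum Ke0) v1 scale1r.
have gram k k' : (K k) ^t* *m K k' = ((p k)^* * p k')%:M.
  rewrite (is_scalar_mxE i0 (kraus_gram_scalar P_auth k k')) -quad_delta !mulmxA.
  rewrite -trmxC_mul -mulmxA !Ke0E trmxCZ -scalemxAl -scalemxAr.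
  by rewrite scalerA mxE v1 mulr1.
have [k0 pk0] : exists k0, p k0 != 0.
  apply/existsP; apply: contraT; rewrite negb_exists => /forallP p0.
  have /matrixP/(_ i0 i0) := K_complete; rewrite summxE big1 => [|k _].
    by rewrite !mxE eqxx => /eqP; rewrite eq_sym oner_eq0.
  by move: (p0 k); rewrite negbK => /eqP pk0; rewrite gram mxE eqxx pk0 mulr0.
by exists (K k0), (fun k => p k / p k0) => k; apply: gram_rank1_parallel.
Qed.

Section ParallelKraus.
Variables (V : 'M[C]_(#|joint S|, #|Sec|)) (be : 'I_m -> C).
Hypothesis K_parallel : forall k, K k = be k *: V.

Definition kraus_weight := \sum_k (be k)^* * be k.

Lemma kraus_weight_neq0 : kraus_weight != 0.
Proof.
have weightV : kraus_weight *: (V ^t* *m V) = 1%:M.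
  rewrite -K_complete /kraus_weight scaler_suml; apply: eq_bigr => k _.
  by rewrite K_parallel trmxCZ -scalemxAl -scalemxAr scalerA.
apply/eqP => weight0; move/matrixP/(_ i0 i0): weightV.
by rewrite weight0 scale0r !mxE eqxx => /eqP; rewrite eq_sym oner_eq0.
Qed.

Lemma ptrace_parallel_entry Q rho (a a' : red S Q) :
  ptrace (E rho) a a' = kraus_weight *
    \tr ((slicemx (~: Q) Q a' *m V) ^t* *m (slicemx (~: Q) Q a *m V) *m op_mx rho).
Proof.
rewrite (ptrace_entry_mx _ _ _ (fun j => in_setC j Q)) E_kraus mulmx_sumr mulmx_suml.
rewrite raddf_sum /kraus_weight mulr_suml; apply: eq_bigr => k _ /=.
rewrite K_parallel trmxCZ -!(scalemxAl, scalemxAr) !mxtraceZ mulrA [_ * be k]mulrC.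
by congr (_ * _); rewrite trmxC_mul !mulmxA mxtrace_mulC !mulmxA mxtrace_mulC !mulmxA.
Qed.

Lemma unauthorized_kl Q : unauthorized E Q -> forall a a' : red S Q,
  is_scalar_mx ((slicemx (~: Q) Q a *m V) ^t* *m (slicemx (~: Q) Q a' *m V)).
Proof.
move=> Q_unauth a a'; pose k := ptrace (E (mx_op (1 *: (e0 *m e0 ^t*)))) a' a / kraus_weight.
apply/is_scalar_mxP; exists k; apply: scalar_mx_of_trace_rank1_states => c v c_ge0 cv1.
have := Q_unauth _ _ (density_rank1 c_ge0 cv1) density_e0 a' a.
rewrite ptrace_parallel_entry mx_opK /k => <-.
by rewrite mulrAC mulfV ?mul1r // kraus_weight_neq0.
Qed.

Lemma unauthorized_setC_authorized Q : unauthorized E Q -> authorized E (~: Q).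
Proof.
move=> /unauthorized_kl/(knill_laflamme_recovery i0)[J [R [R_complete R_scalar]]].
have [D [D_channel D_kraus]] := kraus_mx_channel (I := red S (~: Q)) (J := Sec) R_complete.
exists D; split => // rho rho_dens a b.
suff -> : D (ptrace (E rho)) = rho by [].
apply: op_mx_inj; rewrite D_kraus (op_mx_ptrace _ (in_set_notin_setC Q)) E_kraus.
rewrite !kraus_comp_apply (scalar_kraus_id i0) //.
  move=> [[j w] k] /=; rewrite K_parallel -scalemxAr is_scalar_mxZ // -mulmxA.
  exact: R_scalar.
have QcQ j : (j \in ~: Q) || (j \in Q) by rewrite in_setC orNb.
exact: kraus_comp_complete (kraus_comp_complete R_complete (slicemx_complete QcQ)) K_complete.
Qed.

End ParallelKraus.

Lemma pure_unauthorized_setC_authorized P Q :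
  authorized E P -> pure_scheme E -> unauthorized E Q -> authorized E (~: Q).
Proof.
move=> P_auth E_pure; have [V [be K_parallel]] := pure_scheme_kraus_parallel P_auth E_pure.
exact: unauthorized_setC_authorized K_parallel Q.
Qed.

End Scheme.

Unset Implicit Arguments.

Theorem lemma3 (C : numClosedFieldType) (n : nat) (S : 'I_n -> finType)
  (Sec : finType) (E : op C Sec Sec -> op C (joint S) (joint S)) (t z : nat) :
  (1 < #|Sec|)%N ->
  channel E ->
  (exists P : {set 'I_n}, authorized E P) ->
  (forall P : {set 'I_n}, (t <= #|P|)%N -> authorized E P) ->
  (forall t' : nat,
     (forall P : {set 'I_n}, (t' <= #|P|)%N -> authorized E P) -> (t <= t')%N) ->
  (forall P : {set 'I_n}, (#|P| <= z)%N -> unauthorized E P) ->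
  (forall z' : nat,
     (forall P : {set 'I_n}, (#|P| <= z')%N -> unauthorized E P) -> (z' <= z)%N) ->
  (n <= t + z)%N /\ (pure_scheme E -> n = (t + z)%N).
Proof.
move=> Sec_gt1 E_channel [P0 P0_auth] t_auth t_min z_unauth z_max.
pose i0 : 'I_#|Sec| := Ordinal (ltnW Sec_gt1).
have [m [K [K_complete E_kraus]]] := channel_kraus_mx E_channel.
have cardC (A : {set 'I_n}) : (#|A| + #|~: A|)%N = n by rewrite cardsC card_ord.
have n_le_tz : (n <= t + z)%N.
  have [t_le_n|] := leqP t n; last by lia.
  suff : (n - t <= z)%N by lia.
  apply: z_max => Q Q_small; rewrite -[Q]setCK.
  apply: (authorized_setC_unauthorized E_kraus i0); apply: t_auth.
  by have := cardC Q; lia.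
split=> // E_pure.
have z_le_n : (z <= n)%N.
  have [//|n_lt_z] := leqP z n.
  have : (z.+1 <= z)%N.
    apply: z_max => P _; apply: z_unauth.
    by apply: leq_trans (max_card _) _; rewrite card_ord ltnW.
  by rewrite ltnn.
suff : (t <= n - z)%N by lia.
apply: t_min => P P_large; rewrite -[P]setCK.
apply: (pure_unauthorized_setC_authorized K_complete E_kraus i0 P0_auth E_pure).
by apply: z_unauth; have := cardC P; lia.
Qed.
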